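(* Let $h:(0,\infty)\to[0,\infty)$ be such that there exist $C\ge1$ and $\beta>0$ with $h(s)+C\ge\frac{1}{C}\min\left(1,\frac{t^{\beta}}{s^{\beta}}\right)h(t)$ for all $t,s\in(0,\infty)$. Then there exists $A\ge1$ such that for every $x\in(0,\infty)$, $H(x)\le h(x)\le AH(x)+A$, where $H$ is the largest convex minorant of $h$.
   Context: The largest convex minorant $H$ of $h$ is the largest convex function on $(0,\infty)$ with $H\le h$. *)

From Stdlib Require Import Reals.
Open Scope R_scope.

Definition convex_on_pos (f : R -> R) : Prop :=
  forall x y l : R, 0 < x -> 0 < y -> 0 <= l <= 1 ->
    f (l * x + (1 - l) * y) <= l * f x + (1 - l) * f y.

Definition largest_convex_minorant (h H : R -> R) : Prop :=
  convex_on_pos H /\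
  (forall x, 0 < x -> H x <= h x) /\
  (forall g : R -> R, convex_on_pos g -> (forall x, 0 < x -> g x <= h x) ->
     forall x, 0 < x -> g x <= H x).

(* The growth condition with t = x0 says that h stays above
   c := max(0, h(x0) / (C 2^beta) - C) on the whole interval (0, 2 x0]. The tent
   x |-> max(0, c (1 - x / (2 x0))) is then a convex minorant of h, so
   H(x0) >= c / 2, which rearranges to h(x0) <= 2 C 2^beta H(x0) + C^2 2^beta. *)
From Stdlib Require Import Reals Lra.
Open Scope R_scope.

Lemma Rpower_gt0 (a b : R) : 0 < Rpower a b.
Proof. unfold Rpower; apply exp_pos. Qed.

Lemma Rpower_ge1 (a b : R) : 1 <= a -> 0 <= b -> 1 <= Rpower a b.
Proof. intros Ha Hb; rewrite <- (Rpower_O a) by lra; apply Rle_Rpower; lra. Qed.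

Lemma Rmin_Rpower_ratio_ge (lam beta x y : R) :
  1 <= lam -> 0 <= beta -> 0 < y -> 0 < x <= lam * y ->
  / Rpower lam beta <= Rmin 1 (Rpower y beta / Rpower x beta).
Proof.
  intros Hlam Hbeta Hy Hx.
  pose proof (Rpower_ge1 lam beta Hlam Hbeta) as HP.
  pose proof (Rpower_gt0 x beta); pose proof (Rpower_gt0 y beta).
  apply Rmin_glb.
  - rewrite <- Rinv_1; apply Rinv_le_contravar; lra.
  - assert (Hxy : Rpower x beta <= Rpower lam beta * Rpower y beta).
    { rewrite Rpower_mult_distr by lra; apply Rle_Rpower_l; lra. }
    apply (Rmult_le_reg_l (Rpower lam beta * Rpower x beta)); [nra|].
    replace (Rpower lam beta * Rpower x beta * / Rpower lam beta)
      with (Rpower x beta) by (field; lra).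
    replace (Rpower lam beta * Rpower x beta * (Rpower y beta / Rpower x beta))
      with (Rpower lam beta * Rpower y beta) by (field; lra).
    exact Hxy.
Qed.

Lemma convex_on_pos_const (a : R) : convex_on_pos (fun _ => a).
Proof. intros x y l _ _ _; lra. Qed.

Lemma convex_on_pos_affine (a b : R) : convex_on_pos (fun x => a + b * x).
Proof. intros x y l _ _ _; apply Req_le; ring. Qed.

Lemma convex_on_pos_Rmax (f g : R -> R) :
  convex_on_pos f -> convex_on_pos g -> convex_on_pos (fun x => Rmax (f x) (g x)).
Proof.
  intros Hf Hg x y l Hx Hy Hl.
  pose proof (Rmax_l (f x) (g x)); pose proof (Rmax_r (f x) (g x)).
  pose proof (Rmax_l (f y) (g y)); pose proof (Rmax_r (f y) (g y)).
  apply Rmax_lub.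
  - apply Rle_trans with (l * f x + (1 - l) * f y); [apply Hf; assumption | nra].
  - apply Rle_trans with (l * g x + (1 - l) * g y); [apply Hg; assumption | nra].
Qed.

Section LargestConvexMinorant.

Variables h H : R -> R.
Hypothesis HH : largest_convex_minorant h H.
Hypothesis h_nonneg : forall x, 0 < x -> 0 <= h x.

Lemma largest_convex_minorant_nonneg (x : R) : 0 < x -> 0 <= H x.
Proof.
  destruct HH as [_ [_ Hmax]].
  apply (Hmax (fun _ => 0)); [apply convex_on_pos_const | exact h_nonneg].
Qed.

Lemma largest_convex_minorant_ge_tent (c r : R) :
  0 <= c -> 0 < r -> (forall y, 0 < y <= r -> c <= h y) ->
  forall x, 0 < x -> c - c / r * x <= H x.
Proof.
  intros Hc Hr Hfloor x Hx.
  destruct HH as [_ [_ Hmax]].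
  set (tent := fun y => Rmax 0 (c + - (c / r) * y)).
  assert (Htent_conv : convex_on_pos tent).
  { apply convex_on_pos_Rmax; [apply convex_on_pos_const | apply convex_on_pos_affine]. }
  assert (Htent_le : forall y, 0 < y -> tent y <= h y).
  { intros y Hy; apply Rmax_lub; [now apply h_nonneg|].
    assert (Hslope : c / r * y = c * (y / r)) by (field; lra).
    assert (Hyr_r : y / r * r = y) by (field; lra).
    assert (0 < y / r) by (apply Rdiv_lt_0_compat; lra).
    destruct (Rle_dec y r) as [Hyr | Hyr].
    - pose proof (Hfloor y (conj Hy Hyr)); nra.
    - assert (1 <= y / r) by nra.
      pose proof (h_nonneg y Hy); nra. }
  replace (c - c / r * x) with (c + - (c / r) * x) by ring.
  apply Rle_trans with (tent x); [apply Rmax_r | exact (Hmax tent Htent_conv Htent_le x Hx)].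
Qed.

End LargestConvexMinorant.

Section GrowthCondition.

Variables (h : R -> R) (C beta : R).
Hypothesis h_nonneg : forall s, 0 < s -> 0 <= h s.
Hypothesis HC : 1 <= C.
Hypothesis Hbeta : 0 < beta.
Hypothesis Hcond : forall t s, 0 < t -> 0 < s ->
  h s + C >= / C * Rmin 1 (Rpower t beta / Rpower s beta) * h t.

Lemma h_ge_scaled (lam x y : R) :
  1 <= lam -> 0 < y -> 0 < x <= lam * y ->
  h y / (C * Rpower lam beta) - C <= h x.
Proof.
  intros Hlam Hy Hx.
  pose proof (Rpower_ge1 lam beta Hlam (Rlt_le _ _ Hbeta)) as HP.
  pose proof (Rmin_Rpower_ratio_ge lam beta x y Hlam (Rlt_le _ _ Hbeta) Hy Hx) as Hratio.
  pose proof (Hcond y x Hy (proj1 Hx)) as Hgrowth.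
  pose proof (h_nonneg y Hy).
  assert (Hscaled : / C * / Rpower lam beta * h y
                    <= / C * Rmin 1 (Rpower y beta / Rpower x beta) * h y).
  { apply Rmult_le_compat_r; [assumption|].
    apply Rmult_le_compat_l; [left; apply Rinv_0_lt_compat; lra | exact Hratio]. }
  replace (h y / (C * Rpower lam beta)) with (/ C * / Rpower lam beta * h y)
    by (field; lra).
  lra.
Qed.

Lemma h_le_affine_largest_convex_minorant (H : R -> R) :
  largest_convex_minorant h H -> forall x, 0 < x ->
  h x <= 2 * C * Rpower 2 beta * H x + C * C * Rpower 2 beta.
Proof.
  intros HH x Hx.
  set (P := Rpower 2 beta).
  assert (HP : 1 <= P) by (apply Rpower_ge1; lra).
  set (c := Rmax 0 (h x / (C * P) - C)).
  assert (Hc : 0 <= c) by apply Rmax_l.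
  assert (Hfloor : forall y, 0 < y <= 2 * x -> c <= h y).
  { intros y Hy; apply Rmax_lub; [apply h_nonneg; lra | now apply h_ge_scaled; lra]. }
  pose proof (largest_convex_minorant_ge_tent h H HH h_nonneg c (2 * x)
                Hc ltac:(lra) Hfloor x Hx) as Htent.
  replace (c - c / (2 * x) * x) with (c / 2) in Htent by (field; lra).
  assert (Hhx : h x <= C * P * c + C * C * P).
  { assert (h x / (C * P) - C <= c) by apply Rmax_r.
    assert (0 < C * P) by nra.
    replace (h x) with (C * P * (h x / (C * P))) by (field; lra).
    nra. }
  assert (0 < C * P) by nra.
  nra.
Qed.

End GrowthCondition.

Theorem proposition2p24 (h : R -> R) (C beta : R)
  (h_nonneg : forall s, 0 < s -> 0 <= h s)
  (HC : 1 <= C) (Hbeta : 0 < beta)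
  (Hcond : forall t s, 0 < t -> 0 < s ->
     h s + C >= / C * Rmin 1 (Rpower t beta / Rpower s beta) * h t)
  (H : R -> R) (HH : largest_convex_minorant h H) :
  exists A : R, 1 <= A /\
    forall x, 0 < x -> H x <= h x /\ h x <= A * H x + A.
Proof.
  pose proof (h_le_affine_largest_convex_minorant h C beta h_nonneg HC Hbeta Hcond H HH) as Hh.
  pose proof (largest_convex_minorant_nonneg h H HH h_nonneg) as H_nonneg.
  set (P := Rpower 2 beta) in Hh.
  assert (HP : 1 <= P) by (apply Rpower_ge1; lra).
  exists (C * P * (2 + C)); split; [nra|].
  intros x Hx; split; [exact (proj1 (proj2 HH) x Hx)|].
  pose proof (Hh x Hx); pose proof (H_nonneg x Hx).
  assert (0 <= C * P * C * H x) by (apply Rmult_le_pos; nra).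
  nra.
Qed.
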